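(* Let $a,b>0$, $D=[0,a]\times[0,b]$, and let $f:D\to\mathbb{R}$ be a $C^3$ function. Let $p\in\operatorname{int}D$ be a local maximum of $f$ at which the Hessian of $f$ is negative definite. Then there exist a neighborhood $U$ of $p$ and a number $r>0$ such that for every sufficiently large $n$ for which $D_n$ is nondegenerate, there is exactly one grid vertex $p_{i,j}$ of $D_n$ in $U$ which is maximal within its grid circle $C_r(p_{i,j})$.
   Context: For $n\ge1$, $D_n$ denotes the division of $D$ into $n\times n$ congruent rectangles; its grid vertices are the points $p_{i,j}=\left(\frac{i}{n}a,\frac{j}{n}b\right)$, $0\le i,j\le n$. $D_n$ is called nondegenerate if $f(p)\neq f(p')$ for any two distinct grid vertices $p\neq p'$ of $D_n$. The grid circle of centre $p_{i,j}$ and radius $r$ is $C_r(p_{i,j})=\{p_{l,m}: 0\le l,m\le n,\ \max\{|l-i|,|m-j|\}\le r\}$. A grid vertex $p_{i,j}$ is minimal (resp. maximal) within $C_r(p_{i,j})$ if $f(p_{i,j})\le f(q)$ (resp. $f(p_{i,j})\ge f(q)$) for every $q\in C_r(p_{i,j})$. *)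

From Stdlib Require Export Reals.
Open Scope R_scope.

Definition dist2 (x y x' y' : R) : R := sqrt ((x - x')^2 + (y - y')^2).

Definition open2 (O : R -> R -> Prop) : Prop :=
  forall x y, O x y -> exists d, d > 0 /\
    forall x' y', dist2 x y x' y' < d -> O x' y'.

Definition cont_on2 (g : R -> R -> R) (O : R -> R -> Prop) : Prop :=
  forall x y, O x y -> forall eps, eps > 0 -> exists d, d > 0 /\
    forall x' y', dist2 x y x' y' < d -> Rabs (g x' y' - g x y) < eps.

Definition partial_x_on (g gx : R -> R -> R) (O : R -> R -> Prop) : Prop :=
  forall x y, O x y -> derivable_pt_lim (fun t => g t y) x (gx x y).

Definition partial_y_on (g gy : R -> R -> R) (O : R -> R -> Prop) : Prop :=
  forall x y, O x y -> derivable_pt_lim (fun t => g x t) y (gy x y).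

Fixpoint Ck_on (k : nat) (g : R -> R -> R) (O : R -> R -> Prop) : Prop :=
  match k with
  | O => cont_on2 g O
  | S k' => cont_on2 g O /\ exists gx gy,
      partial_x_on g gx O /\ partial_y_on g gy O /\
      Ck_on k' gx O /\ Ck_on k' gy O
  end.

Definition inD (a b x y : R) : Prop := 0 <= x <= a /\ 0 <= y <= b.

Definition C3_on_D (a b : R) (f : R -> R -> R) : Prop :=
  exists O, open2 O /\ (forall x y, inD a b x y -> O x y) /\ Ck_on 3 f O.

Definition local_max_D (a b : R) (f : R -> R -> R) (px py : R) : Prop :=
  exists d, d > 0 /\ forall x y, inD a b x y -> dist2 px py x y < d ->
    f x y <= f px py.

Definition hessian_neg_def (f : R -> R -> R) (px py : R) : Prop :=
  exists O fx fy fxx fxy fyx fyy,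
    open2 O /\ O px py /\
    partial_x_on f fx O /\ partial_y_on f fy O /\
    partial_x_on fx fxx O /\ partial_y_on fx fxy O /\
    partial_x_on fy fyx O /\ partial_y_on fy fyy O /\
    forall v w, (v <> 0 \/ w <> 0) ->
      v * (fxx px py * v + fxy px py * w) + w * (fyx px py * v + fyy px py * w) < 0.

Definition gx (a : R) (n i : nat) : R := INR i / INR n * a.
Definition gy (b : R) (n j : nat) : R := INR j / INR n * b.

Definition nondegenerate (a b : R) (f : R -> R -> R) (n : nat) : Prop :=
  forall i j l m, (i <= n)%nat -> (j <= n)%nat -> (l <= n)%nat -> (m <= n)%nat ->
    (i, j) <> (l, m) -> f (gx a n i) (gy b n j) <> f (gx a n l) (gy b n m).

Definition in_grid_circle (n : nat) (r : R) (i j l m : nat) : Prop :=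
  (l <= n)%nat /\ (m <= n)%nat /\
  Rmax (Rabs (INR l - INR i)) (Rabs (INR m - INR j)) <= r.

Definition maximal_in_circle (a b : R) (f : R -> R -> R) (n : nat) (r : R)
    (i j : nat) : Prop :=
  forall l m, in_grid_circle n r i j l m ->
    f (gx a n l) (gy b n m) <= f (gx a n i) (gy b n j).

Definition nbhd (U : R -> R -> Prop) (px py : R) : Prop :=
  exists d, d > 0 /\ forall x y, dist2 px py x y < d -> U x y.

(* Near p the Hessian form lies between -2M|v|^2 and -mu|v|^2, so by second-order Taylor
   expansion f is squeezed between two paraboloids with apex at p, and its gradient at q
   satisfies grad f(q) . (p - q) >= mu |q - p|^2.  If a grid vertex q near p is at sup-distance
   D much larger than the mesh s, moving a fraction t ~ s / D of the way towards p and
   rounding to the grid gains about mu t D^2 ~ M s D, which beats the Taylor and rounding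
   losses; so a vertex maximal in a circle of radius r ~ (M / mu)^2 (in mesh units) lies
   within O(s) of p.  The best vertex in a small neighbourhood U of p is maximal in its
   circle, and two circle-maximal vertices in U lie in each other's circles, so
   nondegeneracy forces them to coincide. *)

From Stdlib Require Import Reals Lra Lia Psatz Classical ZArith List.
From Coquelicot Require Import Coquelicot.
Open Scope R_scope.

Lemma dist2_le_Rabs_sum x y x' y' : dist2 x y x' y' <= Rabs (x - x') + Rabs (y - y').
Proof.
  unfold dist2.
  rewrite <- (sqrt_pow2 (Rabs (x - x') + Rabs (y - y'))).
  2: { generalize (Rabs_pos (x - x')) (Rabs_pos (y - y')); lra. }
  apply sqrt_le_1_alt.
  rewrite <- (pow2_abs (x - x')), <- (pow2_abs (y - y')).
  generalize (Rabs_pos (x - x')) (Rabs_pos (y - y')); nra.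
Qed.

Lemma Rabs_le_dist2_x x y x' y' : Rabs (x - x') <= dist2 x y x' y'.
Proof.
  unfold dist2.
  rewrite <- (sqrt_pow2 (Rabs (x - x'))) by apply Rabs_pos.
  apply sqrt_le_1_alt. rewrite pow2_abs.
  generalize (pow2_ge_0 (y - y')); lra.
Qed.

Lemma Rabs_le_dist2_y x y x' y' : Rabs (y - y') <= dist2 x y x' y'.
Proof.
  unfold dist2.
  rewrite <- (sqrt_pow2 (Rabs (y - y'))) by apply Rabs_pos.
  apply sqrt_le_1_alt. rewrite pow2_abs.
  generalize (pow2_ge_0 (x - x')); lra.
Qed.

Definition in_box (px py d x y : R) : Prop := Rabs (x - px) < d /\ Rabs (y - py) < d.

Lemma dist2_lt_of_in_box px py d x y : in_box px py d x y -> dist2 px py x y < 2 * d.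
Proof.
  intros [Hx Hy]. eapply Rle_lt_trans; [apply dist2_le_Rabs_sum|].
  rewrite (Rabs_minus_sym px), (Rabs_minus_sym py). lra.
Qed.

Lemma open2_box O x y : open2 O -> O x y -> exists d, d > 0 /\ forall u v, in_box x y d u v -> O u v.
Proof.
  intros HO Hxy. destruct (HO x y Hxy) as [d [Hd Hball]].
  exists (d / 2). split; [lra|]. intros u v Huv. apply Hball.
  apply dist2_lt_of_in_box in Huv. lra.
Qed.

Lemma in_box_segment px py d x y x' y' s : in_box px py d x y -> in_box px py d x' y' ->
  0 <= s <= 1 -> in_box px py d (x + s * (x' - x)) (y + s * (y' - y)).
Proof.
  assert (convex : forall c c', Rabs c < d -> Rabs c' < d -> 0 <= s <= 1 ->
    Rabs (c + s * (c' - c)) < d).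
  { intros c c' Hc Hc' Hs. apply Rabs_def2 in Hc. apply Rabs_def2 in Hc'.
    destruct (Req_dec s 1) as [->|Hs1]; [apply Rabs_def1; lra|].
    assert (0 < (1 - s) * (d - c)) by (apply Rmult_lt_0_compat; lra).
    assert (0 < (1 - s) * (c + d)) by (apply Rmult_lt_0_compat; lra).
    assert (0 <= s * (d - c')) by (apply Rmult_le_pos; lra).
    assert (0 <= s * (c' + d)) by (apply Rmult_le_pos; lra).
    apply Rabs_def1; nra. }
  intros [Hx Hy] [Hx' Hy'] Hs. split.
  - replace (x + s * (x' - x) - px) with ((x - px) + s * ((x' - px) - (x - px))) by ring.
    apply convex; auto.
  - replace (y + s * (y' - y) - py) with ((y - py) + s * ((y' - py) - (y - py))) by ring.
    apply convex; auto.
Qed.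

Lemma in_box_mono px py d d' x y : d <= d' -> in_box px py d x y -> in_box px py d' x y.
Proof. intros Hd [Hx Hy]. split; lra. Qed.

Lemma pow2_le_of_Rabs_le a D : Rabs a <= D -> a ^ 2 <= D ^ 2.
Proof. intros H. rewrite <- pow2_abs. generalize (Rabs_pos a); nra. Qed.

Lemma Rabs_le_of_pow2_le z B : 0 <= B -> z ^ 2 <= B ^ 2 -> Rabs z <= B.
Proof.
  intros HB Hz. rewrite <- (Rabs_pos_eq B) by exact HB.
  apply Rsqr_le_abs_0. unfold Rsqr. simpl in Hz. lra.
Qed.

Lemma differentiable_of_partials g gx gy O x y : open2 O ->
  partial_x_on g gx O -> partial_y_on g gy O -> cont_on2 gx O -> O x y ->
  differentiable_pt_lim g x y (gx x y) (gy x y).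
Proof.
  intros HO Hx Hy Hc Hxy.
  destruct (open2_box O x y HO Hxy) as [d [Hd Hbox]].
  apply filterdiff_differentiable_pt_lim.
  eapply filterdiff_ext_lin.
  - apply (is_derive_filterdiff g x y gx (gy x y)).
    + apply (locally_2d_locally (fun u v => is_derive (fun z => g z v) u (gx u v))).
      exists (mkposreal d Hd). intros u v Hu Hv.
      apply is_derive_Reals, Hx, Hbox. split; assumption.
    + apply is_derive_Reals, Hy; assumption.
    + apply (continuity_2d_pt_filterlim gx x y). intros eps.
      destruct (Hc x y Hxy eps (cond_pos eps)) as [e [He Hball]].
      exists (mkposreal (e / 2) ltac:(lra)). intros u v Hu Hv. apply Hball.
      assert (Huv : in_box x y (e / 2) u v) by (split; assumption).
      apply dist2_lt_of_in_box in Huv. simpl in Huv. lra.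
  - intros [u v]. unfold plus, scal; simpl. unfold mult; simpl. ring.
Qed.

Lemma derivable_along_line g gx gy O x0 y0 v w t : open2 O ->
  partial_x_on g gx O -> partial_y_on g gy O -> cont_on2 gx O ->
  O (x0 + t * v) (y0 + t * w) ->
  derivable_pt_lim (fun s => g (x0 + s * v) (y0 + s * w)) t
    (gx (x0 + t * v) (y0 + t * w) * v + gy (x0 + t * v) (y0 + t * w) * w).
Proof.
  intros HO Hx Hy Hc Ht.
  apply (derivable_pt_lim_comp_2d g (fun s => x0 + s * v) (fun s => y0 + s * w)).
  - eapply differentiable_of_partials; eauto.
  - apply is_derive_Reals. auto_derive; auto; ring.
  - apply is_derive_Reals. auto_derive; auto; ring.
Qed.

Lemma derivable_pt_lim_lin_comb (F G : R -> R) t c d lF lG :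
  derivable_pt_lim F t lF -> derivable_pt_lim G t lG ->
  derivable_pt_lim (fun s => F s * c + G s * d) t (lF * c + lG * d).
Proof.
  intros HF HG.
  replace (lF * c + lG * d) with ((lF * c + F t * 0) + (lG * d + G t * 0)) by ring.
  apply (derivable_pt_lim_plus (fun s => F s * c) (fun s => G s * d)).
  - apply (derivable_pt_lim_mult F (fun _ => c)); auto; apply derivable_pt_lim_const.
  - apply (derivable_pt_lim_mult G (fun _ => d)); auto; apply derivable_pt_lim_const.
Qed.

Lemma concave_le_tangent (h h' h'' : R -> R) :
  (forall t, 0 <= t <= 1 -> derivable_pt_lim h t (h' t)) ->
  (forall t, 0 <= t <= 1 -> derivable_pt_lim h' t (h'' t)) ->
  (forall t, 0 <= t <= 1 -> h'' t <= 0) -> h 1 <= h 0 + h' 0.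
Proof.
  intros H1 H2 H3.
  destruct (MVT_cor2 h h' 0 1 ltac:(lra) ltac:(intros; apply H1; lra)) as [c [Hc Hc']].
  destruct (Req_dec c 0) as [->|Hc0]; [lra|].
  destruct (MVT_cor2 h' h'' 0 c ltac:(lra) ltac:(intros; apply H2; lra)) as [e [He He']].
  assert (h'' e <= 0) by (apply H3; lra).
  assert (h'' e * (c - 0) <= 0) by nra. lra.
Qed.

Lemma taylor2_upper (G G' G'' : R -> R) c :
  (forall t, 0 <= t <= 1 -> derivable_pt_lim G t (G' t)) ->
  (forall t, 0 <= t <= 1 -> derivable_pt_lim G' t (G'' t)) ->
  (forall t, 0 <= t <= 1 -> G'' t <= c) -> G 1 <= G 0 + G' 0 + c / 2.
Proof.
  intros H1 H2 H3.
  assert (Hsq : forall t, derivable_pt_lim (fun s => c / 2 * s ^ 2) t (c * t))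
    by (intros; apply is_derive_Reals; auto_derive; auto; simpl; field).
  assert (Hlin : forall t, derivable_pt_lim (fun s => c * s) t c)
    by (intros; apply is_derive_Reals; auto_derive; auto; ring).
  enough (G 1 - c / 2 * 1 ^ 2 <= G 0 - c / 2 * 0 ^ 2 + (G' 0 - c * 0)) by lra.
  apply (concave_le_tangent (fun s => G s - c / 2 * s ^ 2) (fun s => G' s - c * s)
    (fun s => G'' s - c)).
  - intros t Ht. apply (derivable_pt_lim_minus G (fun s => c / 2 * s ^ 2)); auto.
  - intros t Ht. apply (derivable_pt_lim_minus G' (fun s => c * s)); auto.
  - intros t Ht. specialize (H3 t Ht). lra.
Qed.

Lemma taylor2_lower (G G' G'' : R -> R) c :
  (forall t, 0 <= t <= 1 -> derivable_pt_lim G t (G' t)) ->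
  (forall t, 0 <= t <= 1 -> derivable_pt_lim G' t (G'' t)) ->
  (forall t, 0 <= t <= 1 -> c <= G'' t) -> G 0 + G' 0 + c / 2 <= G 1.
Proof.
  intros H1 H2 H3.
  enough (- G 1 <= - G 0 + - G' 0 + - c / 2) by lra.
  apply (taylor2_upper (fun s => - G s) (fun s => - G' s) (fun s => - G'' s)).
  - intros; apply derivable_pt_lim_opp; auto.
  - intros; apply derivable_pt_lim_opp; auto.
  - intros t Ht; specialize (H3 t Ht); lra.
Qed.

Lemma derivative_zero_at_local_max (g : R -> R) x l d : d > 0 ->
  derivable_pt_lim g x l -> (forall t, x - d < t < x + d -> g t <= g x) -> l = 0.
Proof.
  intros Hd Hg Hmax.
  rewrite <- (derive_pt_eq_0 g x l (exist _ l Hg) Hg).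
  apply (deriv_maximum g (x - d) (x + d)); [lra | lra |].
  intros t Ht1 Ht2. apply Hmax. lra.
Qed.

Lemma grid_floor h x n : 0 < h -> 0 <= x < INR n * h ->
  exists i, (i < n)%nat /\ INR i * h <= x < INR i * h + h.
Proof.
  intros Hh Hx.
  destruct (base_Int_part (x / h)) as [Hlo Hhi].
  assert (Hxh : x = x / h * h) by (field; lra).
  assert (Hq : 0 <= x / h) by (apply Rdiv_le_0_compat; lra).
  assert (Hz : (-1 < Int_part (x / h))%Z) by (apply lt_IZR; simpl; lra).
  exists (Z.to_nat (Int_part (x / h))).
  rewrite INR_IZR_INZ, Z2Nat.id by lia.
  split; [|split; nra].
  apply INR_lt. rewrite INR_IZR_INZ, Z2Nat.id by lia. nra.
Qed.

Lemma grid_cell_index_gap h c m i i2 R : 0 < h ->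
  INR i2 * h <= m < INR i2 * h + h -> Rabs (m - INR i * h) <= c -> h + c <= R * h ->
  Rabs (INR i2 - INR i) <= R.
Proof.
  intros Hh Hcell Hm HR.
  apply (Rmult_le_reg_r h); [exact Hh|].
  rewrite <- (Rabs_pos_eq h) at 1 by lra. rewrite <- Rabs_mult.
  replace ((INR i2 - INR i) * h) with ((INR i2 * h - m) + (m - INR i * h)) by ring.
  eapply Rle_trans; [apply Rabs_triang|].
  assert (Rabs (INR i2 * h - m) <= h) by (apply Rabs_le; lra). lra.
Qed.

Lemma list_argmax {A : Type} (P : A -> Prop) (F : A -> R) (l : list A) :
  (exists x, In x l /\ P x) ->
  exists x, In x l /\ P x /\ forall y, In y l -> P y -> F y <= F x.
Proof.
  induction l as [|a l IH]; intros [x0 [Hx0 Px0]]; [destruct Hx0|].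
  destruct (classic (exists x, In x l /\ P x)) as [Hl|Hl].
  - destruct (IH Hl) as [x [Hx [Px Hmax]]].
    destruct (classic (P a /\ F x < F a)) as [[Pa Hlt]|Ha].
    + exists a. split; [left; reflexivity|split; [exact Pa|]].
      intros y [<-|Hy] Py; [lra|]. specialize (Hmax y Hy Py). lra.
    + exists x. split; [right; exact Hx|split; [exact Px|]].
      intros y [<-|Hy] Py; [|auto]. apply Rnot_lt_le. intro. apply Ha. auto.
  - destruct Hx0 as [<-|Hx0]; [|exfalso; apply Hl; eauto].
    exists a. split; [left; reflexivity|split; [exact Px0|]].
    intros y [<-|Hy] Py; [lra|]. exfalso. apply Hl. eauto.
Qed.

Lemma grid_argmax (n : nat) (P : nat -> nat -> Prop) (F : nat -> nat -> R) :
  (exists i j, (i <= n)%nat /\ (j <= n)%nat /\ P i j) ->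
  exists i j, (i <= n)%nat /\ (j <= n)%nat /\ P i j /\
    forall l m, (l <= n)%nat -> (m <= n)%nat -> P l m -> F l m <= F i j.
Proof.
  intros [i0 [j0 [Hi0 [Hj0 P0]]]].
  set (grid := list_prod (seq 0 (S n)) (seq 0 (S n))).
  assert (Hgrid : forall i j, In (i, j) grid <-> (i <= n)%nat /\ (j <= n)%nat).
  { intros i j. unfold grid. rewrite in_prod_iff, !in_seq. lia. }
  destruct (list_argmax (fun ij => P (fst ij) (snd ij)) (fun ij => F (fst ij) (snd ij)) grid)
    as [[i j] [Hij [Pij Hmax]]].
  { exists (i0, j0). rewrite Hgrid. auto. }
  apply Hgrid in Hij. exists i, j. repeat split; try tauto.
  intros l m Hl Hm Plm. apply (Hmax (l, m)); [apply Hgrid|]; auto.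
Qed.

Definition quad_form (a b c d v w : R) : R := (a * v + b * w) * v + (c * v + d * w) * w.

Lemma cross_term_lower e E v w : Rabs e <= E -> - (E * (v ^ 2 + w ^ 2) / 2) <= e * (v * w).
Proof.
  intros He. apply Rabs_le_between in He.
  (* 4 (e v w + E (v^2 + w^2) / 2) = (E + e) (v + w)^2 + (E - e) (v - w)^2 *)
  assert (0 <= (E + e) * (v + w) ^ 2) by (apply Rmult_le_pos; [lra | apply pow2_ge_0]).
  assert (0 <= (E - e) * (v - w) ^ 2) by (apply Rmult_le_pos; [lra | apply pow2_ge_0]).
  nra.
Qed.

Lemma quad_form_lower a b c d M v w :
  Rabs a <= M -> Rabs b <= M -> Rabs c <= M -> Rabs d <= M ->
  - (2 * M) * (v ^ 2 + w ^ 2) <= quad_form a b c d v w.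
Proof.
  intros Ha Hb Hc Hd. unfold quad_form.
  pose proof (cross_term_lower b M v w Hb). pose proof (cross_term_lower c M v w Hc).
  apply Rabs_le_between in Ha. apply Rabs_le_between in Hd.
  assert (0 <= (a + M) * v ^ 2) by (apply Rmult_le_pos; [lra | apply pow2_ge_0]).
  assert (0 <= (d + M) * w ^ 2) by (apply Rmult_le_pos; [lra | apply pow2_ge_0]).
  nra.
Qed.

Lemma quad_form_upper_perturb A B C D a b c d κ ε v w :
  quad_form A B C D v w <= - κ * (v ^ 2 + w ^ 2) ->
  Rabs (a - A) <= ε -> Rabs (b - B) <= ε -> Rabs (c - C) <= ε -> Rabs (d - D) <= ε ->
  quad_form a b c d v w <= - (κ - 2 * ε) * (v ^ 2 + w ^ 2).
Proof.
  intros HQ Ha Hb Hc Hd.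
  assert (Hdiff : - (2 * ε) * (v ^ 2 + w ^ 2) <= quad_form (A - a) (B - b) (C - c) (D - d) v w)
    by (apply quad_form_lower; rewrite Rabs_minus_sym; assumption).
  unfold quad_form in *. lra.
Qed.

Lemma neg_def_quad_form_uniform A B C D :
  (forall v w, (v <> 0 \/ w <> 0) -> quad_form A B C D v w < 0) ->
  exists κ, κ > 0 /\ forall v w, quad_form A B C D v w <= - κ * (v ^ 2 + w ^ 2).
Proof.
  intros Hneg. unfold quad_form in *.
  set (s := (B + C) / 2).
  assert (HA : A < 0) by (specialize (Hneg 1 0 ltac:(left; lra)); lra).
  assert (HD : D < 0) by (specialize (Hneg 0 1 ltac:(right; lra)); lra).
  assert (Hdet : A * D - s ^ 2 > 0).
  { specialize (Hneg s (- A) ltac:(right; lra)).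
    replace ((A * s + B * - A) * s + (C * s + D * - A) * - A) with (A * (A * D - s ^ 2)) in Hneg
      by (unfold s; field).
    nra. }
  exists ((A * D - s ^ 2) / (- (A + D))). split; [apply Rdiv_lt_0_compat; lra|].
  intros v w. apply (Rmult_le_reg_r (- (A + D))); [lra|].
  replace (- ((A * D - s ^ 2) / - (A + D)) * (v ^ 2 + w ^ 2) * - (A + D))
    with (- ((A * D - s ^ 2) * (v ^ 2 + w ^ 2))) by (field; lra).
  (* completing squares: Q (A + D) = (A v + s w)^2 + (s v + D w)^2 + (A D - s^2) (v^2 + w^2) *)
  assert (E : ((A * v + B * w) * v + (C * v + D * w) * w) * - (A + D)
              + (A * D - s ^ 2) * (v ^ 2 + w ^ 2)
              = - ((A * v + s * w) ^ 2 + (s * v + D * w) ^ 2)) by (unfold s; field).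
  generalize (pow2_ge_0 (A * v + s * w)) (pow2_ge_0 (s * v + D * w)). lra.
Qed.

Section NondegenerateMaximum.

Variables f fx fy fxx fxy fyx fyy : R -> R -> R.
Variable O : R -> R -> Prop.
Variables px py δ μ M : R.

Local Notation W := (in_box px py δ).
Local Notation Q x y := (quad_form (fxx x y) (fxy x y) (fyx x y) (fyy x y)).

Hypothesis HO : open2 O.
Hypothesis Hfx : partial_x_on f fx O.
Hypothesis Hfy : partial_y_on f fy O.
Hypothesis Hfxx : partial_x_on fx fxx O.
Hypothesis Hfxy : partial_y_on fx fxy O.
Hypothesis Hfyx : partial_x_on fy fyx O.
Hypothesis Hfyy : partial_y_on fy fyy O.
Hypothesis Hcx : cont_on2 fx O.
Hypothesis Hcxx : cont_on2 fxx O.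
Hypothesis Hcyx : cont_on2 fyx O.
Hypothesis HWO : forall x y, W x y -> O x y.
Hypothesis HQ : forall x y, W x y -> forall v w,
  - (2 * M) * (v ^ 2 + w ^ 2) <= Q x y v w <= - μ * (v ^ 2 + w ^ 2).
Hypothesis Hfx0 : fx px py = 0.
Hypothesis Hfy0 : fy px py = 0.
Hypothesis Hμ : μ > 0.
Hypothesis Hδ : δ > 0.

Lemma in_box_center : W px py.
Proof. unfold in_box. rewrite !Rminus_diag, Rabs_R0. lra. Qed.

Lemma curvature_bounds_ordered : μ <= 2 * M.
Proof. destruct (HQ px py in_box_center 1 0). lra. Qed.

Lemma f_quadratic_bounds x y x' y' : W x y -> W x' y' ->
  f x y + (fx x y * (x' - x) + fy x y * (y' - y)) - M * ((x' - x) ^ 2 + (y' - y) ^ 2)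
    <= f x' y' /\
  f x' y' <=
    f x y + (fx x y * (x' - x) + fy x y * (y' - y)) - μ / 2 * ((x' - x) ^ 2 + (y' - y) ^ 2).
Proof.
  intros Hq Hq'.
  set (v := x' - x). set (w := y' - y).
  set (G := fun s => f (x + s * v) (y + s * w)).
  set (G' := fun s => fx (x + s * v) (y + s * w) * v + fy (x + s * v) (y + s * w) * w).
  set (G'' := fun s => Q (x + s * v) (y + s * w) v w).
  assert (Hseg : forall s, 0 <= s <= 1 -> W (x + s * v) (y + s * w))
    by (intros; apply in_box_segment; auto).
  assert (HG : forall s, 0 <= s <= 1 -> derivable_pt_lim G s (G' s))
    by (intros s Hs; eapply derivable_along_line; eauto).
  assert (HG' : forall s, 0 <= s <= 1 -> derivable_pt_lim G' s (G'' s)).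
  { intros s Hs. unfold G'', quad_form.
    apply derivable_pt_lim_lin_comb; eapply derivable_along_line; eauto. }
  assert (G0 : G 0 = f x y) by (unfold G; f_equal; ring).
  assert (G1 : G 1 = f x' y') by (unfold G, v, w; f_equal; ring).
  assert (G'0 : G' 0 = fx x y * v + fy x y * w)
    by (unfold G'; rewrite !Rmult_0_l, !Rplus_0_r; reflexivity).
  split.
  - pose proof (taylor2_lower G G' G'' (- (2 * M) * (v ^ 2 + w ^ 2)) HG HG'
      (fun s Hs => proj1 (HQ _ _ (Hseg s Hs) v w))).
    lra.
  - pose proof (taylor2_upper G G' G'' (- μ * (v ^ 2 + w ^ 2)) HG HG'
      (fun s Hs => proj2 (HQ _ _ (Hseg s Hs) v w))).
    lra.
Qed.

Lemma gradient_toward_peak x y : W x y ->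
  μ * ((x - px) ^ 2 + (y - py) ^ 2) <= fx x y * (px - x) + fy x y * (py - y).
Proof.
  intros Hq.
  destruct (f_quadratic_bounds x y px py Hq in_box_center) as [_ Hqp].
  destruct (f_quadratic_bounds px py x y in_box_center Hq) as [_ Hpq].
  rewrite Hfx0, Hfy0 in Hpq.
  replace ((px - x) ^ 2) with ((x - px) ^ 2) in Hqp by ring.
  replace ((py - y) ^ 2) with ((y - py) ^ 2) in Hqp by ring.
  lra.
Qed.

Lemma gradient_error_bound x y e1 e2 H D :
  Rabs (x - px) <= D -> Rabs (y - py) <= D -> 0 < D -> 2 * D < δ ->
  0 < H -> Rabs e1 <= H -> Rabs e2 <= H ->
  - (fx x y * e1 + fy x y * e2) <= 4 * M * H * D.
Proof.
  intros Hx Hy HD HDδ HH He1 He2.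
  assert (HM := curvature_bounds_ordered).
  (* compare f at q, at p and at q - (D/H) e, a point at sup-distance at most D from q *)
  set (l := D / H).
  assert (Hl : 0 < l) by (unfold l; apply Rdiv_lt_0_compat; lra).
  assert (HlH : l * H = D) by (unfold l; field; lra).
  set (u1 := l * e1). set (u2 := l * e2).
  assert (Hu : forall e, Rabs e <= H -> Rabs (l * e) <= D).
  { intros e He. rewrite Rabs_mult, (Rabs_pos_eq l) by lra. rewrite <- HlH.
    apply Rmult_le_compat_l; lra. }
  pose proof (Hu e1 He1) as Hu1. pose proof (Hu e2 He2) as Hu2. fold u1 u2 in Hu1, Hu2.
  assert (Hq : W x y) by (split; lra).
  assert (Hz : W (x - u1) (y - u2)).
  { split.
    - replace (x - u1 - px) with ((x - px) + - u1) by ring.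
      eapply Rle_lt_trans; [apply Rabs_triang|]. rewrite Rabs_Ropp. lra.
    - replace (y - u2 - py) with ((y - py) + - u2) by ring.
      eapply Rle_lt_trans; [apply Rabs_triang|]. rewrite Rabs_Ropp. lra. }
  destruct (f_quadratic_bounds x y _ _ Hq Hz) as [Hqz _].
  destruct (f_quadratic_bounds px py _ _ in_box_center Hz) as [_ Hpz].
  destruct (f_quadratic_bounds px py x y in_box_center Hq) as [Hpq _].
  rewrite Hfx0, Hfy0 in Hpz, Hpq.
  replace (x - u1 - x) with (- u1) in Hqz by ring.
  replace (y - u2 - y) with (- u2) in Hqz by ring.
  assert (Hsq : (- u1) ^ 2 + (- u2) ^ 2 + ((x - px) ^ 2 + (y - py) ^ 2) <= 4 * D ^ 2).
  { apply pow2_le_of_Rabs_le in Hu1, Hu2, Hx, Hy. nra. }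
  assert (0 <= μ / 2 * ((x - u1 - px) ^ 2 + (y - u2 - py) ^ 2))
    by (apply Rmult_le_pos; [lra | generalize (pow2_ge_0 (x - u1 - px)) (pow2_ge_0 (y - u2 - py)); lra]).
  assert (Hgu : - (fx x y * u1 + fy x y * u2) <= 4 * M * D ^ 2).
  { apply (Rmult_le_compat_l M) in Hsq; lra. }
  apply (Rmult_le_reg_l l); [exact Hl|].
  replace (l * (4 * M * H * D)) with (4 * M * D ^ 2) by (rewrite <- HlH; ring).
  unfold u1, u2 in Hgu. lra.
Qed.

Lemma f_increases_toward_peak x y z1 z2 t H D :
  Rabs (x - px) <= D -> Rabs (y - py) <= D -> D ^ 2 <= (x - px) ^ 2 + (y - py) ^ 2 ->
  2 * D < δ -> 0 < H < D -> 0 < t -> 4 * M * t <= μ -> t * μ * D = 16 * M * H ->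
  Rabs (z1 - (x + t * (px - x))) <= H -> Rabs (z2 - (y + t * (py - y))) <= H ->
  f x y < f z1 z2.
Proof.
  intros Hx Hy HDq HDδ [HH HHD] Ht Htμ HtD Hz1 Hz2.
  assert (HM := curvature_bounds_ordered).
  assert (Ht1 : t <= 1) by nra.
  set (v1 := px - x) in *. set (v2 := py - y) in *.
  set (e1 := z1 - (x + t * v1)) in *. set (e2 := z2 - (y + t * v2)) in *.
  set (K := v1 ^ 2 + v2 ^ 2).
  assert (HK : D ^ 2 <= K) by (unfold K, v1, v2; nra).
  assert (Hq : W x y) by (split; lra).
  assert (Hz : W z1 z2).
  { assert (Hshrink : forall c e, Rabs c <= D -> Rabs e <= H -> Rabs ((1 - t) * c + e) < δ).
    { intros c e Hc He. eapply Rle_lt_trans; [apply Rabs_triang|].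
      rewrite Rabs_mult, (Rabs_pos_eq (1 - t)) by lra.
      assert ((1 - t) * Rabs c <= D) by (generalize (Rabs_pos c); nra). lra. }
    split.
    - replace (z1 - px) with ((1 - t) * (x - px) + e1) by (unfold e1, v1; ring). auto.
    - replace (z2 - py) with ((1 - t) * (y - py) + e2) by (unfold e2, v2; ring). auto. }
  destruct (f_quadratic_bounds x y z1 z2 Hq Hz) as [Hqz _].
  replace (z1 - x) with (t * v1 + e1) in Hqz by (unfold e1; ring).
  replace (z2 - y) with (t * v2 + e2) in Hqz by (unfold e2; ring).
  assert (Hdescent : μ * K <= fx x y * v1 + fy x y * v2).
  { pose proof (gradient_toward_peak x y Hq). unfold K, v1, v2. nra. }
  assert (Herr : - (fx x y * e1 + fy x y * e2) <= 4 * M * H * D)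
    by (apply gradient_error_bound; lra).
  assert (Hstep : (t * v1 + e1) ^ 2 + (t * v2 + e2) ^ 2 <= 2 * t ^ 2 * K + 4 * H ^ 2).
  { apply pow2_le_of_Rabs_le in Hz1, Hz2. fold e1 e2 in Hz1, Hz2. unfold K.
    generalize (pow2_ge_0 (t * v1 - e1)) (pow2_ge_0 (t * v2 - e2)). nra. }
  assert (HK0 : 0 <= K) by (unfold K; generalize (pow2_ge_0 v1) (pow2_ge_0 v2); lra).
  (* the gain t mu K along the descent direction beats the quadratic loss and the grid error *)
  assert (S1 : M * ((t * v1 + e1) ^ 2 + (t * v2 + e2) ^ 2) <= M * (2 * t ^ 2 * K + 4 * H ^ 2))
    by (apply Rmult_le_compat_l; lra).
  assert (S2 : t * (μ * K) <= t * (fx x y * v1 + fy x y * v2)) by (apply Rmult_le_compat_l; lra).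
  assert (S3 : 2 * M * t ^ 2 * K <= t * μ * K / 2).
  { assert (0 <= t * K) by (apply Rmult_le_pos; lra).
    assert ((2 * M * t) * (t * K) <= (μ / 2) * (t * K)) by (apply Rmult_le_compat_r; lra).
    lra. }
  assert (S4 : t * μ * D ^ 2 <= t * μ * K) by (apply Rmult_le_compat_l; nra).
  assert (S5 : t * μ * D ^ 2 = 16 * M * H * D) by (rewrite <- HtD; ring).
  assert (S6 : 0 < 4 * M * H * (D - H)) by (apply Rmult_lt_0_compat; nra).
  lra.
Qed.

Variables a b : R.
Hypothesis Hboxa : 0 < px - δ /\ px + δ < a.
Hypothesis Hboxb : 0 < py - δ /\ py + δ < b.

Local Notation U := (in_box px py (δ / 4)).

(* With [s := Rmax a b / n] the coarser mesh, which is at most [ρ] times either mesh: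
   a circle-maximal vertex in [U] lies within [c_near * s] of p (coordinatewise), the
   improving step used to prove this has length [c_step * s], and the best vertex in [U]
   lies within [c_best * s] of p.  The radius makes the circle reach the improving vertex
   and any other vertex within [c_near * s] of p. *)
Let ρ := Rmax a b / Rmin a b.
Let c_near := 64 * M ^ 2 / μ ^ 2 + 1.
Let c_step := 16 * M / μ.
Let c_best := 4 * M / μ + 1.
Let radius := (c_step + 2 * c_near) * ρ + 1.

Lemma grid_constants_pos : 0 < ρ /\ 1 < c_near /\ 0 < c_step /\ 1 < c_best /\ 0 < radius.
Proof.
  assert (HM := curvature_bounds_ordered).
  assert (0 < Rmin a b) by (unfold Rmin; destruct Rle_dec; lra).
  assert (0 < Rmax a b) by (unfold Rmax; destruct Rle_dec; lra).
  assert (Hρ : 0 < ρ) by (apply Rdiv_lt_0_compat; lra).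
  assert (0 < 64 * M ^ 2 / μ ^ 2) by (apply Rdiv_lt_0_compat; nra).
  assert (Hstep : 0 < c_step) by (apply Rdiv_lt_0_compat; lra).
  assert (0 < 4 * M / μ) by (apply Rdiv_lt_0_compat; lra).
  unfold c_near, c_best, radius. repeat split; try lra.
  assert (0 < (c_step + 2 * c_near) * ρ) by (apply Rmult_lt_0_compat; unfold c_near; lra).
  lra.
Qed.

Section Grid.

Variable n : nat.
Hypothesis Hn : (1 <= n)%nat.

Let h := a / INR n.
Let k := b / INR n.
Let s := Rmax a b / INR n.

Hypothesis Hfine : (radius + c_near + c_best) * s < δ / 4.

Lemma grid_steps : 0 < h <= s /\ 0 < k <= s /\ s <= ρ * h /\ s <= ρ * k.
Proof.
  assert (Hn0 : 0 < INR n) by (apply lt_0_INR; lia).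
  assert (0 < Rmin a b) by (unfold Rmin; destruct Rle_dec; lra).
  assert (Hs : 0 < s) by (unfold s, Rmax; destruct Rle_dec; apply Rdiv_lt_0_compat; lra).
  assert (scale : forall c, 0 < c -> c <= Rmax a b -> Rmin a b <= c ->
    0 < c / INR n <= s /\ s <= ρ * (c / INR n)).
  { intros c Hc Hcmax Hcmin. split; [split|].
    - apply Rdiv_lt_0_compat; lra.
    - unfold s, Rdiv. apply Rmult_le_compat_r; [left; apply Rinv_0_lt_compat|]; lra.
    - replace (ρ * (c / INR n)) with (s * (1 + (c - Rmin a b) / Rmin a b))
        by (unfold s, ρ; field; lra).
      assert (0 <= (c - Rmin a b) / Rmin a b) by (apply Rdiv_le_0_compat; lra).
      nra. }
  destruct (scale a) as [Hha Hhb]; [lra | apply Rmax_l | apply Rmin_l |].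
  destruct (scale b) as [Hka Hkb]; [lra | apply Rmax_r | apply Rmin_r |].
  unfold h, k. tauto.
Qed.

Lemma grid_vertex i j : gx a n i = INR i * h /\ gy b n j = INR j * k.
Proof.
  assert (0 < INR n) by (apply lt_0_INR; lia).
  unfold gx, gy, h, k. split; field; lra.
Qed.

Lemma circle_max_near_peak i j : (i <= n)%nat -> (j <= n)%nat ->
  U (INR i * h) (INR j * k) -> maximal_in_circle a b f n radius i j ->
  Rabs (INR i * h - px) <= c_near * s /\ Rabs (INR j * k - py) <= c_near * s.
Proof.
  intros Hi Hj [Hux Huy] Hmax.
  destruct grid_steps as [[Hh Hhs] [[Hk Hks] [Hsh Hsk]]].
  destruct grid_constants_pos as [Hρ [Hnear [Hstep [Hbest Hr]]]].
  assert (HM := curvature_bounds_ordered).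
  set (x := INR i * h) in *. set (y := INR j * k) in *.
  set (D := Rmax (Rabs (x - px)) (Rabs (y - py))).
  assert (HDx : Rabs (x - px) <= D) by apply Rmax_l.
  assert (HDy : Rabs (y - py) <= D) by apply Rmax_r.
  destruct (Rle_dec D (c_near * s)) as [Hle|Hgt]; [split; lra|exfalso].
  apply Rnot_le_lt in Hgt.
  (* otherwise the grid vertex next to q + t (p - q) is in the circle and beats q *)
  assert (HDq : D ^ 2 <= (x - px) ^ 2 + (y - py) ^ 2).
  { unfold D, Rmax. destruct Rle_dec; rewrite pow2_abs;
      generalize (pow2_ge_0 (x - px)) (pow2_ge_0 (y - py)); lra. }
  assert (HD4 : D < δ / 4) by (apply Rmax_lub_lt; assumption).
  assert (HsD : s < D) by nra.
  assert (HD0 : 0 < D) by lra.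
  assert (Hcurv : 64 * M ^ 2 * s <= μ ^ 2 * D).
  { assert (μ ^ 2 * (c_near * s) = 64 * M ^ 2 * s + μ ^ 2 * s) by (unfold c_near; field; lra).
    assert (μ ^ 2 * (c_near * s) <= μ ^ 2 * D) by (apply Rmult_le_compat_l; nra).
    nra. }
  set (t := c_step * s / D).
  assert (Ht : 0 < t) by (apply Rdiv_lt_0_compat; nra).
  assert (HtD : t * D = c_step * s) by (unfold t; field; lra).
  assert (HtμD : t * μ * D = 16 * M * s) by (unfold t, c_step; field; lra).
  assert (Htμ : 4 * M * t <= μ).
  { apply (Rmult_le_reg_r (μ * D)); [nra|].
    replace (4 * M * t * (μ * D)) with (4 * M * (t * μ * D)) by ring. rewrite HtμD. nra. }
  assert (Ht1 : t <= 1) by nra.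
  set (m1 := x + t * (px - x)). set (m2 := y + t * (py - y)).
  assert (Hm1 : Rabs (m1 - x) <= c_step * s /\ 0 <= m1 < INR n * h).
  { replace (INR n * h) with a by (unfold h; field; apply not_0_INR; lia).
    split.
    - replace (m1 - x) with (t * (px - x)) by (unfold m1; ring).
      rewrite Rabs_mult, (Rabs_pos_eq t), Rabs_minus_sym by lra.
      rewrite <- HtD. apply Rmult_le_compat_l; lra.
    - assert (Rabs (m1 - px) <= D).
      { replace (m1 - px) with ((1 - t) * (x - px)) by (unfold m1; ring).
        rewrite Rabs_mult, (Rabs_pos_eq (1 - t)) by lra.
        generalize (Rabs_pos (x - px)); nra. }
      apply Rabs_le_between' in H. lra. }
  assert (Hm2 : Rabs (m2 - y) <= c_step * s /\ 0 <= m2 < INR n * k).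
  { replace (INR n * k) with b by (unfold k; field; apply not_0_INR; lia).
    split.
    - replace (m2 - y) with (t * (py - y)) by (unfold m2; ring).
      rewrite Rabs_mult, (Rabs_pos_eq t), Rabs_minus_sym by lra.
      rewrite <- HtD. apply Rmult_le_compat_l; lra.
    - assert (Rabs (m2 - py) <= D).
      { replace (m2 - py) with ((1 - t) * (y - py)) by (unfold m2; ring).
        rewrite Rabs_mult, (Rabs_pos_eq (1 - t)) by lra.
        generalize (Rabs_pos (y - py)); nra. }
      apply Rabs_le_between' in H. lra. }
  destruct (grid_floor h m1 n Hh (proj2 Hm1)) as [i2 [Hi2 Hcell1]].
  destruct (grid_floor k m2 n Hk (proj2 Hm2)) as [j2 [Hj2 Hcell2]].
  assert (Hbetter : f x y < f (INR i2 * h) (INR j2 * k)).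
  { apply (f_increases_toward_peak x y _ _ t s D); try lra;
      apply Rabs_le_between'; fold m1 m2; lra. }
  assert (Hcircle : in_grid_circle n radius i j i2 j2).
  { split; [lia|split; [lia|]]. apply Rmax_lub.
    - apply (grid_cell_index_gap h (c_step * s) m1); try tauto. unfold radius. nra.
    - apply (grid_cell_index_gap k (c_step * s) m2); try tauto. unfold radius. nra. }
  specialize (Hmax i2 j2 Hcircle).
  destruct (grid_vertex i j) as [Ei Ej]. destruct (grid_vertex i2 j2) as [Ei2 Ej2].
  rewrite Ei, Ej, Ei2, Ej2 in Hmax. fold x y in Hmax. lra.
Qed.

Lemma exists_circle_max : exists i j, (i <= n)%nat /\ (j <= n)%nat /\
  U (INR i * h) (INR j * k) /\ maximal_in_circle a b f n radius i j.
Proof.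
  destruct grid_steps as [[Hh Hhs] [[Hk Hks] [Hsh Hsk]]].
  destruct grid_constants_pos as [Hρ [Hnear [Hstep [Hbest Hr]]]].
  assert (HM := curvature_bounds_ordered).
  assert (Hn0 : INR n <> 0) by (apply not_0_INR; lia).
  assert (Hpa : 0 <= px < INR n * h) by (replace (INR n * h) with a by (unfold h; field; lra); lra).
  assert (Hpb : 0 <= py < INR n * k) by (replace (INR n * k) with b by (unfold k; field; lra); lra).
  destruct (grid_floor h px n Hh Hpa) as [i0 [Hi0 Hcell0]].
  destruct (grid_floor k py n Hk Hpb) as [j0 [Hj0 Hcell0']].
  assert (Hq0 : Rabs (INR i0 * h - px) <= s /\ Rabs (INR j0 * k - py) <= s)
    by (split; apply Rabs_le_between'; lra).
  destruct (grid_argmax n (fun i j => U (INR i * h) (INR j * k))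
              (fun i j => f (INR i * h) (INR j * k)))
    as [i [j [Hi [Hj [HUij Hbest_ij]]]]].
  { exists i0, j0. repeat split; try lia; nra. }
  exists i, j. do 3 (split; [assumption|]).
  set (x := INR i * h) in *. set (y := INR j * k) in *.
  assert (HW0 : W (INR i0 * h) (INR j0 * k)) by (split; nra).
  assert (HWq : W x y) by (destruct HUij; split; lra).
  destruct (f_quadratic_bounds px py _ _ in_box_center HW0) as [Hf0 _].
  destruct (f_quadratic_bounds px py x y in_box_center HWq) as [_ Hfq].
  rewrite Hfx0, Hfy0 in Hf0, Hfq.
  assert (Hbetter : f (INR i0 * h) (INR j0 * k) <= f x y) by (apply Hbest_ij; try lia; split; nra).
  assert (Hsq0 : (INR i0 * h - px) ^ 2 + (INR j0 * k - py) ^ 2 <= 2 * s ^ 2)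
    by (destruct Hq0 as [Hx0 Hy0]; apply pow2_le_of_Rabs_le in Hx0, Hy0; lra).
  (* Taylor from p: mu |q - p|^2 <= 4 M s^2, so q is within c_best s of p *)
  assert (Hnear_best : μ * ((x - px) ^ 2 + (y - py) ^ 2) <= 4 * M * s ^ 2).
  { apply (Rmult_le_compat_l M) in Hsq0; lra. }
  assert (Hc : forall z, z ^ 2 <= (x - px) ^ 2 + (y - py) ^ 2 -> Rabs z <= c_best * s).
  { intros z Hz. apply Rabs_le_of_pow2_le; [nra|].
    assert (4 * M * s ^ 2 <= μ * (c_best * s ^ 2)) by (unfold c_best; field_simplify; nra).
    assert (c_best * s ^ 2 <= (c_best * s) ^ 2) by nra.
    assert (μ * z ^ 2 <= μ * (c_best * s) ^ 2) by nra.
    nra. }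
  assert (Hbx : Rabs (x - px) <= c_best * s) by (apply Hc; generalize (pow2_ge_0 (y - py)); lra).
  assert (Hby : Rabs (y - py) <= c_best * s) by (apply Hc; generalize (pow2_ge_0 (x - px)); lra).
  (* the whole circle around q lies in U *)
  intros l m [Hl [Hm Hlm]].
  destruct (grid_vertex i j) as [-> ->]. destruct (grid_vertex l m) as [-> ->].
  apply Hbest_ij; [assumption | assumption |].
  assert (Hgap : forall c c0 st v, Rabs (c - c0) <= radius -> 0 < st <= s ->
    Rabs (c0 * st - v) <= c_best * s -> Rabs (c * st - v) < δ / 4).
  { intros c c0 st v Hcc [Hst0 Hst] Hv.
    replace (c * st - v) with ((c - c0) * st + (c0 * st - v)) by ring.
    eapply Rle_lt_trans; [apply Rabs_triang|].
    rewrite Rabs_mult, (Rabs_pos_eq st) by lra.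
    assert (Rabs (c - c0) * st <= radius * s) by (apply Rmult_le_compat; try lra; apply Rabs_pos).
    nra. }
  split.
  - apply (Hgap _ (INR i)); try assumption; [eapply Rle_trans; [apply Rmax_l | exact Hlm] | lra].
  - apply (Hgap _ (INR j)); try assumption; [eapply Rle_trans; [apply Rmax_r | exact Hlm] | lra].
Qed.

Lemma circle_max_unique i j i' j' : nondegenerate a b f n ->
  (i <= n)%nat -> (j <= n)%nat -> U (INR i * h) (INR j * k) ->
  maximal_in_circle a b f n radius i j ->
  (i' <= n)%nat -> (j' <= n)%nat -> U (INR i' * h) (INR j' * k) ->
  maximal_in_circle a b f n radius i' j' ->
  i' = i /\ j' = j.
Proof.
  intros Hnd Hi Hj HU Hmax Hi' Hj' HU' Hmax'.
  destruct grid_steps as [[Hh Hhs] [[Hk Hks] [Hsh Hsk]]].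
  destruct grid_constants_pos as [Hρ [Hnear [Hstep [Hbest Hr]]]].
  destruct (circle_max_near_peak i j Hi Hj HU Hmax) as [Hx Hy].
  destruct (circle_max_near_peak i' j' Hi' Hj' HU' Hmax') as [Hx' Hy'].
  (* both lie within c_near s of p, hence in each other's circle *)
  assert (Hgap : forall c c' st v, 0 < st -> s <= ρ * st ->
    Rabs (c * st - v) <= c_near * s -> Rabs (c' * st - v) <= c_near * s ->
    Rabs (c' - c) <= radius).
  { intros c c' st v Hst Hsst Hc Hc'.
    apply (Rmult_le_reg_r st); [exact Hst|].
    rewrite <- (Rabs_pos_eq st) at 1 by lra. rewrite <- Rabs_mult.
    replace ((c' - c) * st) with ((c' * st - v) - (c * st - v)) by ring.
    eapply Rle_trans; [apply Rabs_triang|]. rewrite Rabs_Ropp.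
    assert (c_near * s <= c_near * (ρ * st)) by (apply Rmult_le_compat_l; lra).
    unfold radius. nra. }
  assert (Hcirc : in_grid_circle n radius i j i' j' /\ in_grid_circle n radius i' j' i j).
  { repeat split; try assumption; apply Rmax_lub; eauto. }
  specialize (Hmax i' j' (proj1 Hcirc)). specialize (Hmax' i j (proj2 Hcirc)).
  destruct (Nat.eq_dec i' i), (Nat.eq_dec j' j); try (split; assumption);
    (exfalso; refine (Hnd i' j' i j Hi' Hj' Hi Hj _ _); [congruence | lra]).
Qed.

Lemma unique_circle_max : nondegenerate a b f n ->
  exists i j : nat,
    ((i <= n)%nat /\ (j <= n)%nat /\ U (gx a n i) (gy b n j) /\
     maximal_in_circle a b f n radius i j) /\
    (forall i' j' : nat,
       (i' <= n)%nat -> (j' <= n)%nat -> U (gx a n i') (gy b n j') ->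
       maximal_in_circle a b f n radius i' j' -> i' = i /\ j' = j).
Proof.
  intros Hnd.
  destruct exists_circle_max as [i [j [Hi [Hj [HU Hmax]]]]].
  exists i, j. destruct (grid_vertex i j) as [-> ->]. split; [tauto|].
  intros i' j' Hi' Hj' HU' Hmax'. destruct (grid_vertex i' j') as [Ei Ej]. rewrite Ei, Ej in HU'.
  eapply circle_max_unique; eassumption.
Qed.

End Grid.

Lemma eventually_unique_circle_max :
  exists (U : R -> R -> Prop) (r : R),
    nbhd U px py /\ r > 0 /\
    exists N : nat, forall n : nat, (N <= n)%nat -> (1 <= n)%nat ->
      nondegenerate a b f n ->
      exists i j : nat,
        ((i <= n)%nat /\ (j <= n)%nat /\ U (gx a n i) (gy b n j) /\
         maximal_in_circle a b f n r i j) /\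
        (forall i' j' : nat,
           (i' <= n)%nat -> (j' <= n)%nat -> U (gx a n i') (gy b n j') ->
           maximal_in_circle a b f n r i' j' -> i' = i /\ j' = j).
Proof.
  destruct grid_constants_pos as [Hρ [Hnear [Hstep [Hbest Hr]]]].
  exists U, radius. split; [|split; [exact Hr|]].
  { exists (δ / 4). split; [lra|]. intros x y Hxy. split.
    - rewrite Rabs_minus_sym. eapply Rle_lt_trans; [apply Rabs_le_dist2_x | exact Hxy].
    - rewrite Rabs_minus_sym. eapply Rle_lt_trans; [apply Rabs_le_dist2_y | exact Hxy]. }
  set (C := (radius + c_near + c_best) * Rmax a b).
  assert (HC : 0 < C)
    by (apply Rmult_lt_0_compat; [unfold c_near, c_best in *; lra | unfold Rmax; destruct Rle_dec; lra]).
  destruct (INR_unbounded (4 * C / δ)) as [N HN].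
  exists N. intros n HNn Hn. apply unique_circle_max; [exact Hn|].
  assert (Hn0 : 0 < INR n) by (apply lt_0_INR; lia).
  assert (INR N <= INR n) by (apply le_INR; exact HNn).
  replace ((radius + c_near + c_best) * (Rmax a b / INR n)) with (C / INR n) by (unfold C; field; lra).
  apply (Rmult_lt_reg_r (INR n * (4 / δ))); [apply Rmult_lt_0_compat; [lra | apply Rdiv_lt_0_compat; lra]|].
  replace (C / INR n * (INR n * (4 / δ))) with (4 * C / δ) by (field; lra).
  replace (δ / 4 * (INR n * (4 / δ))) with (INR n) by (field; lra).
  lra.
Qed.

End NondegenerateMaximum.

Lemma gradient_zero_at_local_max a b f fx fy O px py :
  0 < px < a /\ 0 < py < b -> local_max_D a b f px py -> O px py ->
  partial_x_on f fx O -> partial_y_on f fy O -> fx px py = 0 /\ fy px py = 0.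
Proof.
  intros [[Hpx Hpa] [Hpy Hpb]] [d [Hd Hmax]] HOp Hfx Hfy.
  set (e := Rmin (Rmin d (Rmin px (a - px))) (Rmin py (b - py))).
  assert (He : 0 < e /\ e <= d /\ e <= px /\ e <= a - px /\ e <= py /\ e <= b - py)
    by (unfold e, Rmin; repeat destruct Rle_dec; lra).
  assert (Hnear : forall u v, Rabs (px - u) + Rabs (py - v) < e -> inD a b u v ->
    f u v <= f px py).
  { intros u v Huv HD. apply Hmax; [exact HD|].
    eapply Rle_lt_trans; [apply dist2_le_Rabs_sum | lra]. }
  split.
  - apply (derivative_zero_at_local_max (fun t => f t py) px _ e); [lra | apply Hfx; exact HOp |].
    intros t Ht. apply Hnear; [|split; lra].
    rewrite Rminus_diag, Rabs_R0, Rplus_0_r. apply Rabs_def1; lra.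
  - apply (derivative_zero_at_local_max (fun t => f px t) py _ e); [lra | apply Hfy; exact HOp |].
    intros t Ht. apply Hnear; [|split; lra].
    rewrite Rminus_diag, Rabs_R0, Rplus_0_l. apply Rabs_def1; lra.
Qed.

Lemma derivable_x_ext_near (g1 g2 : R -> R -> R) x y l :
  locally_2d (fun u v => g1 u v = g2 u v) x y ->
  derivable_pt_lim (fun t => g1 t y) x l -> derivable_pt_lim (fun t => g2 t y) x l.
Proof.
  intros Heq H. apply is_derive_Reals. apply is_derive_Reals in H.
  eapply is_derive_ext_loc; [|exact H].
  apply (locally_2d_1d_const_y (fun u v => g1 u v = g2 u v)). exact Heq.
Qed.

Lemma derivable_y_ext_near (g1 g2 : R -> R -> R) x y l :
  locally_2d (fun u v => g1 u v = g2 u v) x y ->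
  derivable_pt_lim (fun t => g1 x t) y l -> derivable_pt_lim (fun t => g2 x t) y l.
Proof.
  intros Heq H. apply is_derive_Reals. apply is_derive_Reals in H.
  eapply is_derive_ext_loc; [|exact H].
  apply (locally_2d_1d_const_x (fun u v => g1 u v = g2 u v)). exact Heq.
Qed.

Lemma hessian_neg_def_quad_form f fx fy fxx fxy fyx fyy O px py :
  open2 O -> O px py -> partial_x_on f fx O -> partial_y_on f fy O ->
  partial_x_on fx fxx O -> partial_y_on fx fxy O ->
  partial_x_on fy fyx O -> partial_y_on fy fyy O ->
  hessian_neg_def f px py ->
  forall v w, (v <> 0 \/ w <> 0) ->
    quad_form (fxx px py) (fxy px py) (fyx px py) (fyy px py) v w < 0.
Proof.
  intros HO HOp Hfx Hfy Hfxx Hfxy Hfyx Hfyy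
    [O' [hx [hy [hxx [hxy [hyx [hyy [HO' [HO'p [Hhx [Hhy [Hhxx [Hhxy [Hhyx [Hhyy Hneg]]]]]]]]]]]]]]].
  (* the two families of partial derivatives agree near p, hence so do their derivatives at p *)
  destruct (open2_box O px py HO HOp) as [e1 [He1 Hb1]].
  destruct (open2_box O' px py HO' HO'p) as [e2 [He2 Hb2]].
  set (e := Rmin e1 e2).
  assert (He : 0 < e /\ e <= e1 /\ e <= e2) by (unfold e, Rmin; destruct Rle_dec; lra).
  assert (Hboth : forall u v, Rabs (u - px) < e -> Rabs (v - py) < e -> O u v /\ O' u v).
  { intros u v Hu Hv. split; [apply Hb1 | apply Hb2]; split; lra. }
  assert (Hx : locally_2d (fun u v => hx u v = fx u v) px py).
  { exists (mkposreal e (proj1 He)). intros u v Hu Hv. simpl in Hu, Hv.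
    destruct (Hboth u v Hu Hv).
    apply (uniqueness_limite (fun t => f t v) u); [apply Hhx | apply Hfx]; assumption. }
  assert (Hy : locally_2d (fun u v => hy u v = fy u v) px py).
  { exists (mkposreal e (proj1 He)). intros u v Hu Hv. simpl in Hu, Hv.
    destruct (Hboth u v Hu Hv).
    apply (uniqueness_limite (fun t => f u t) v); [apply Hhy | apply Hfy]; assumption. }
  assert (Exx : fxx px py = hxx px py)
    by (apply (uniqueness_limite (fun t => fx t py) px);
        [apply Hfxx | apply (derivable_x_ext_near hx fx), Hhxx]; assumption).
  assert (Exy : fxy px py = hxy px py)
    by (apply (uniqueness_limite (fun t => fx px t) py);
        [apply Hfxy | apply (derivable_y_ext_near hx fx), Hhxy]; assumption).
  assert (Eyx : fyx px py = hyx px py)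
    by (apply (uniqueness_limite (fun t => fy t py) px);
        [apply Hfyx | apply (derivable_x_ext_near hy fy), Hhyx]; assumption).
  assert (Eyy : fyy px py = hyy px py)
    by (apply (uniqueness_limite (fun t => fy px t) py);
        [apply Hfyy | apply (derivable_y_ext_near hy fy), Hhyy]; assumption).
  intros v w Hvw. specialize (Hneg v w Hvw).
  unfold quad_form. rewrite Exx, Exy, Eyx, Eyy. lra.
Qed.

Lemma hessian_form_bounds_near fxx fxy fyx fyy O px py :
  O px py -> cont_on2 fxx O -> cont_on2 fxy O -> cont_on2 fyx O -> cont_on2 fyy O ->
  (forall v w, (v <> 0 \/ w <> 0) ->
     quad_form (fxx px py) (fxy px py) (fyx px py) (fyy px py) v w < 0) ->
  exists d μ M, d > 0 /\ μ > 0 /\ forall x y, in_box px py d x y -> forall v w,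
    - (2 * M) * (v ^ 2 + w ^ 2) <= quad_form (fxx x y) (fxy x y) (fyx x y) (fyy x y) v w
      <= - μ * (v ^ 2 + w ^ 2).
Proof.
  intros HOp Hcxx Hcxy Hcyx Hcyy Hneg.
  destruct (neg_def_quad_form_uniform _ _ _ _ Hneg) as [κ [Hκ Hunif]].
  set (ε := κ / 4).
  assert (Hε : ε > 0) by (unfold ε; lra).
  destruct (Hcxx px py HOp ε Hε) as [d1 [Hd1 Hc1]].
  destruct (Hcxy px py HOp ε Hε) as [d2 [Hd2 Hc2]].
  destruct (Hcyx px py HOp ε Hε) as [d3 [Hd3 Hc3]].
  destruct (Hcyy px py HOp ε Hε) as [d4 [Hd4 Hc4]].
  set (d := Rmin (Rmin d1 d2) (Rmin d3 d4) / 2).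
  assert (Hd : 0 < d /\ 2 * d <= d1 /\ 2 * d <= d2 /\ 2 * d <= d3 /\ 2 * d <= d4)
    by (unfold d, Rmin; repeat destruct Rle_dec; lra).
  set (A := fxx px py). set (B := fxy px py). set (C := fyx px py). set (D := fyy px py).
  exists d, (κ - 2 * ε), (Rabs A + Rabs B + Rabs C + Rabs D + ε).
  split; [lra|split; [unfold ε; lra|]].
  intros x y Hxy v w. apply dist2_lt_of_in_box in Hxy.
  assert (Hxx : Rabs (fxx x y - A) <= ε) by (left; apply Hc1; lra).
  assert (Hxy' : Rabs (fxy x y - B) <= ε) by (left; apply Hc2; lra).
  assert (Hyx : Rabs (fyx x y - C) <= ε) by (left; apply Hc3; lra).
  assert (Hyy : Rabs (fyy x y - D) <= ε) by (left; apply Hc4; lra).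
  split.
  - assert (Hentry : forall c c0, Rabs (c - c0) <= ε -> Rabs c0 <= Rabs A + Rabs B + Rabs C + Rabs D ->
      Rabs c <= Rabs A + Rabs B + Rabs C + Rabs D + ε).
    { intros c c0 Hc Hc0. replace c with ((c - c0) + c0) by ring.
      eapply Rle_trans; [apply Rabs_triang | lra]. }
    generalize (Rabs_pos A) (Rabs_pos B) (Rabs_pos C) (Rabs_pos D). intros.
    apply quad_form_lower; eapply Hentry; eauto; lra.
  - eapply quad_form_upper_perturb; eauto.
Qed.

Theorem theorem1 (a b : R) (f : R -> R -> R) (px py : R) :
  a > 0 -> b > 0 ->
  C3_on_D a b f ->
  (0 < px < a /\ 0 < py < b) ->
  local_max_D a b f px py ->
  hessian_neg_def f px py ->
  exists (U : R -> R -> Prop) (r : R),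
    nbhd U px py /\ r > 0 /\
    exists N : nat, forall n : nat, (N <= n)%nat -> (1 <= n)%nat ->
      nondegenerate a b f n ->
      exists i j : nat,
        ((i <= n)%nat /\ (j <= n)%nat /\ U (gx a n i) (gy b n j) /\
         maximal_in_circle a b f n r i j) /\
        (forall i' j' : nat,
           (i' <= n)%nat -> (j' <= n)%nat -> U (gx a n i') (gy b n j') ->
           maximal_in_circle a b f n r i' j' -> i' = i /\ j' = j).
Proof.
  intros Ha Hb [O [HO [HDO HC3]]] Hp Hmax Hhess.
  destruct HC3 as [_ [fx [fy [Hfx [Hfy [[Hcx [fxx [fxy [Hfxx [Hfxy [[Hcxx _] [Hcxy _]]]]]]]
    [_ [fyx [fyy [Hfyx [Hfyy [[Hcyx _] [Hcyy _]]]]]]]]]]]]].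
  assert (HOp : O px py) by (apply HDO; unfold inD; lra).
  destruct (gradient_zero_at_local_max a b f fx fy O px py Hp Hmax HOp Hfx Hfy) as [Hfx0 Hfy0].
  destruct (hessian_form_bounds_near fxx fxy fyx fyy O px py HOp Hcxx Hcxy Hcyx Hcyy
    (hessian_neg_def_quad_form f fx fy fxx fxy fyx fyy O px py
       HO HOp Hfx Hfy Hfxx Hfxy Hfyx Hfyy Hhess)) as [d0 [μ [M [Hd0 [Hμ HQ]]]]].
  destruct (open2_box O px py HO HOp) as [e [He HeO]].
  set (δ := Rmin (Rmin d0 e) (Rmin (Rmin (px / 2) ((a - px) / 2)) (Rmin (py / 2) ((b - py) / 2)))).
  assert (Hδ : 0 < δ /\ δ <= d0 /\ δ <= e /\ δ <= px / 2 /\ δ <= (a - px) / 2 /\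
               δ <= py / 2 /\ δ <= (b - py) / 2)
    by (unfold δ, Rmin; repeat destruct Rle_dec; lra).
  apply (eventually_unique_circle_max f fx fy fxx fxy fyx fyy O px py δ μ M);
    try assumption; try lra.
  - intros x y Hxy. apply HeO. apply (in_box_mono _ _ δ); [lra | exact Hxy].
  - intros x y Hxy. apply HQ. apply (in_box_mono _ _ δ); [lra | exact Hxy].
Qed.
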